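(* Let $(F\colon\mathcal C\to\mathcal D,U\colon\mathcal D\to\mathcal C)$ be a comonoidal adjunction between left (resp. right) closed monoidal categories. Then $(F,U)$ is a left (resp. right) Hopf adjunction if and only if $U$ (viewed as a strong monoidal functor) is left (resp. right) closed.
   Context: Monoidal categories are strict. A comonoidal adjunction is an adjunction $(F,U)$ with unit $\eta$, counit $\varepsilon$ between monoidal categories where $F,U$ are comonoidal functors (structure $F_2(X,Y)\colon F(X\otimes Y)\to FX\otimes FY$, $F_0\colon F\mathbb 1\to\mathbb 1$) and $\eta,\varepsilon$ are comonoidal; then $U$ is strong comonoidal, hence strong monoidal via the inverse structure maps. Hopf operators: $\mathbb H^l_{c,d}=(Fc\otimes\varepsilon_d)F_2(c,Ud)\colon F(c\otimes Ud)\to Fc\otimes d$, $\mathbb H^r_{d,c}=(\varepsilon_d\otimes Fc)F_2(Ud,c)\colon F(Ud\otimes c)\to d\otimes Fc$; the adjunction is left (resp. right) Hopf if $\mathbb H^l$ (resp. $\mathbb H^r$) is invertible. A monoidal category is left closed if each $?\otimes X$ has a right adjoint $[X,?]^l$ with counit $\mathrm{ev}^X_Y\colon[X,Y]^l\otimes X\to Y$, right closed if each $X\otimes ?$ has a right adjoint $[X,?]^r$ with counit $X\otimes[X,Y]^r\to Y$. A strong monoidal functor $U$ (structure $U_2(A,B)\colon UA\otimes UB\to U(A\otimes B)$) is left closed if the canonical morphisms $U[X,Y]^l\to[UX,UY]^l$ corresponding to $U(\mathrm{ev}^X_Y)U_2([X,Y]^l,X)$ are isomorphisms; right closed is defined analogously.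 *)

(* Categories are presented in the "arrows-only" style: a type of objects,
   a type of all morphisms, domain/codomain maps, identities and a composition
   [comp g f] (= g o f) that is meaningful when [cod f = dom g].
   This makes strictness of the monoidal structure expressible as plain
   equalities of objects and of morphisms, with no transports. *)

Set Implicit Arguments.
Unset Strict Implicit.

Record MonCat := {
  ob : Type;
  mor : Type;
  dom : mor -> ob;
  cod : mor -> ob;
  idm : ob -> mor;
  comp : mor -> mor -> mor;
  tob : ob -> ob -> ob;
  tmor : mor -> mor -> mor;
  munit : ob;
  dom_id : forall a, dom (idm a) = a;
  cod_id : forall a, cod (idm a) = a;
  dom_comp : forall f g, cod f = dom g -> dom (comp g f) = dom f;
  cod_comp : forall f g, cod f = dom g -> cod (comp g f) = cod g;
  comp_idl : forall f, comp (idm (cod f)) f = f;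
  comp_idr : forall f, comp f (idm (dom f)) = f;
  comp_assoc : forall f g h, cod f = dom g -> cod g = dom h ->
      comp h (comp g f) = comp (comp h g) f;
  dom_tmor : forall f g, dom (tmor f g) = tob (dom f) (dom g);
  cod_tmor : forall f g, cod (tmor f g) = tob (cod f) (cod g);
  tmor_id : forall a b, tmor (idm a) (idm b) = idm (tob a b);
  tmor_comp : forall f g f' g', cod f = dom g -> cod f' = dom g' ->
      tmor (comp g f) (comp g' f') = comp (tmor g g') (tmor f f');
  tob_assoc : forall a b c, tob (tob a b) c = tob a (tob b c);
  tmor_assoc : forall f g h, tmor (tmor f g) h = tmor f (tmor g h);
  tob_unitl : forall a, tob munit a = a;
  tob_unitr : forall a, tob a munit = a;
  tmor_unitl : forall f, tmor (idm munit) f = f;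
  tmor_unitr : forall f, tmor f (idm munit) = f
}.

Arguments dom {m} _.
Arguments cod {m} _.
Arguments idm {m} _.
Arguments comp {m} _ _.
Arguments tob {m} _ _.
Arguments tmor {m} _ _.

Definition hom (C : MonCat) (f : mor C) (a b : ob C) : Prop :=
  dom f = a /\ cod f = b.

Definition is_inverse (C : MonCat) (f g : mor C) : Prop :=
  dom g = cod f /\ cod g = dom f /\
  comp g f = idm (dom f) /\ comp f g = idm (cod f).

Definition is_iso (C : MonCat) (f : mor C) : Prop :=
  exists g, is_inverse f g.

Record Functor (C D : MonCat) := {
  fob : ob C -> ob D;
  fmor : mor C -> mor D;
  fmor_dom : forall f, dom (fmor f) = fob (dom f);
  fmor_cod : forall f, cod (fmor f) = fob (cod f);
  fmor_id : forall a, fmor (idm a) = idm (fob a);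
  fmor_comp : forall f g, cod f = dom g -> fmor (comp g f) = comp (fmor g) (fmor f)
}.

Record ComonFun (C D : MonCat) := {
  cfun :> Functor C D;
  F2 : ob C -> ob C -> mor D;
  F0 : mor D;
  F2_hom : forall X Y,
      hom (F2 X Y) (fob cfun (tob X Y)) (tob (fob cfun X) (fob cfun Y));
  F2_nat : forall f g,
      comp (tmor (fmor cfun f) (fmor cfun g)) (F2 (dom f) (dom g))
      = comp (F2 (cod f) (cod g)) (fmor cfun (tmor f g));
  F0_hom : hom F0 (fob cfun (munit C)) (munit D);
  F2_coassoc : forall X Y Z,
      comp (tmor (F2 X Y) (idm (fob cfun Z))) (F2 (tob X Y) Z)
      = comp (tmor (idm (fob cfun X)) (F2 Y Z)) (F2 X (tob Y Z));
  F0_counitl : forall X,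
      comp (tmor F0 (idm (fob cfun X))) (F2 (munit C) X) = idm (fob cfun X);
  F0_counitr : forall X,
      comp (tmor (idm (fob cfun X)) F0) (F2 X (munit C)) = idm (fob cfun X)
}.

(* Comonoidal adjunction F -| U, F : C -> D, U : D -> C, with unit eta and
   counit eps, both comonoidal natural transformations
   (eta : Id_C => UF, eps : FU => Id_D, where Id is strict comonoidal and UF, FU
   carry the composite comonoidal structures). *)
Record ComonAdj (C D : MonCat) := {
  LF : ComonFun C D;
  RU : ComonFun D C;
  eta : ob C -> mor C;
  eps : ob D -> mor D;
  eta_hom : forall c, hom (eta c) c (fob RU (fob LF c));
  eta_nat : forall f,
      comp (eta (cod f)) f = comp (fmor RU (fmor LF f)) (eta (dom f));
  eps_hom : forall d, hom (eps d) (fob LF (fob RU d)) d;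
  eps_nat : forall g,
      comp (eps (cod g)) (fmor LF (fmor RU g)) = comp g (eps (dom g));
  triangle_F : forall c,
      comp (eps (fob LF c)) (fmor LF (eta c)) = idm (fob LF c);
  triangle_U : forall d,
      comp (fmor RU (eps d)) (eta (fob RU d)) = idm (fob RU d);
  eta_comon2 : forall X Y,
      comp (comp (F2 RU (fob LF X) (fob LF Y)) (fmor RU (F2 LF X Y))) (eta (tob X Y))
      = comp (tmor (eta X) (eta Y)) (idm (tob X Y));
  eta_comon0 :
      comp (comp (F0 RU) (fmor RU (F0 LF))) (eta (munit C)) = idm (munit C);
  eps_comon2 : forall A B,
      comp (idm (tob A B)) (eps (tob A B))
      = comp (tmor (eps A) (eps B))
             (comp (F2 LF (fob RU A) (fob RU B)) (fmor LF (F2 RU A B)));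
  eps_comon0 :
      comp (idm (munit D)) (eps (munit D)) = comp (F0 LF) (fmor LF (F0 RU))
}.

Definition hopf_l (C D : MonCat) (A : ComonAdj C D) (c : ob C) (d : ob D) : mor D :=
  comp (tmor (idm (fob (LF A) c)) (eps A d)) (F2 (LF A) c (fob (RU A) d)).

Definition hopf_r (C D : MonCat) (A : ComonAdj C D) (d : ob D) (c : ob C) : mor D :=
  comp (tmor (eps A d) (idm (fob (LF A) c))) (F2 (LF A) (fob (RU A) d) c).

Definition left_Hopf (C D : MonCat) (A : ComonAdj C D) : Prop :=
  forall c d, is_iso (hopf_l A c d).

Definition right_Hopf (C D : MonCat) (A : ComonAdj C D) : Prop :=
  forall d c, is_iso (hopf_r A d c).

(* Left closed structure: ? (x) X -| [X,?]^l with counit ev^X_Y, given by the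
   universal property of the counit. *)
Record LeftClosed (C : MonCat) := {
  lihom : ob C -> ob C -> ob C;
  lev : ob C -> ob C -> mor C;
  lev_hom : forall X Y, hom (lev X Y) (tob (lihom X Y) X) Y;
  lev_univ : forall X Y Z g, hom g (tob Z X) Y ->
      exists! h, hom h Z (lihom X Y) /\ comp (lev X Y) (tmor h (idm X)) = g
}.

(* Right closed structure: X (x) ? -| [X,?]^r with counit X (x) [X,Y]^r --> Y. *)
Record RightClosed (C : MonCat) := {
  rihom : ob C -> ob C -> ob C;
  rev : ob C -> ob C -> mor C;
  rev_hom : forall X Y, hom (rev X Y) (tob X (rihom X Y)) Y;
  rev_univ : forall X Y Z g, hom g (tob X Z) Y ->
      exists! h, hom h Z (rihom X Y) /\ comp (rev X Y) (tmor (idm X) h) = g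
}.

(* Closedness of a strong monoidal functor U : D -> C with monoidal structure
   Um2 A B : UA (x) UB --> U(A (x) B): the canonical morphism
   U[X,Y] --> [UX,UY] (the one corresponding to U(ev) o Um2([X,Y],X) under the
   adjunction) is an isomorphism. *)
Definition left_closed_functor (C D : MonCat) (LC : LeftClosed C) (LD : LeftClosed D)
    (U : Functor D C) (Um2 : ob D -> ob D -> mor C) : Prop :=
  forall X Y h,
    hom h (fob U (lihom LD X Y)) (lihom LC (fob U X) (fob U Y)) ->
    comp (lev LC (fob U X) (fob U Y)) (tmor h (idm (fob U X)))
      = comp (fmor U (lev LD X Y)) (Um2 (lihom LD X Y) X) ->
    is_iso h.

Definition right_closed_functor (C D : MonCat) (RC : RightClosed C) (RD : RightClosed D)
    (U : Functor D C) (Um2 : ob D -> ob D -> mor C) : Prop :=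
  forall X Y h,
    hom h (fob U (rihom RD X Y)) (rihom RC (fob U X) (fob U Y)) ->
    comp (rev RC (fob U X) (fob U Y)) (tmor (idm (fob U X)) h)
      = comp (fmor U (rev RD X Y)) (Um2 X (rihom RD X Y)) ->
    is_iso h.

(* The comparison morphism h : U[d,e] -> [Ud,Ue] and the Hopf operator
   H^l_{c,d} are linked by a commuting square of natural bijections of
   hom-sets: the adjunction F -| U and currying in C and in D identify
   postcomposition with h on C(c, U[d,e]) with precomposition with H^l_{c,d}
   on D(Fc (x) d, e).  The square commutes because the adjunct of H^l_{c,d}
   is U_2(Fc,d) o (eta_c (x) Ud).  By Yoneda, h is invertible for all d, e iff
   these postcompositions are bijective for all c, iff the precompositions are
   bijective for all e, iff every H^l_{c,d} is invertible.  The right-handed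
   statement is the left-handed one for the reversed tensor product. *)

From Corelib Require Import ssreflect.
Set Implicit Arguments.
Unset Strict Implicit.

Section HomCalculus.
Variable C : MonCat.
Implicit Types (f g : mor C) (a b c : ob C).

Lemma hom_idm a : hom (idm a) a a.
Proof. split; [apply dom_id | apply cod_id]. Qed.

Lemma hom_comp f g a b c : hom f a b -> hom g b c -> hom (comp g f) a c.
Proof.
move=> [df cf] [dg cg]; split; [rewrite dom_comp | rewrite cod_comp]; congruence.
Qed.

Lemma hom_tmor f g a b a' b' :
  hom f a b -> hom g a' b' -> hom (tmor f g) (tob a a') (tob b b').
Proof. move=> [? ?] [? ?]; split; [rewrite dom_tmor | rewrite cod_tmor]; congruence. Qed.

Lemma hom_inverse f g a b : hom f a b -> is_inverse f g -> hom g b a.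
Proof. move=> [? ?] [? [? _]]; split; congruence. Qed.

Lemma hom_cod_dom f g a b c : hom f a b -> hom g b c -> cod f = dom g.
Proof. by move=> [_ ->] [-> _]. Qed.

Lemma comp_idl_hom f a b : hom f a b -> comp (idm b) f = f.
Proof. by move=> [_ <-]; apply: comp_idl. Qed.

Lemma comp_idr_hom f a b : hom f a b -> comp f (idm a) = f.
Proof. by move=> [<- _]; apply: comp_idr. Qed.

End HomCalculus.

Lemma hom_fmor (C D : MonCat) (F : Functor C D) f a b :
  hom f a b -> hom (fmor F f) (fob F a) (fob F b).
Proof. move=> [? ?]; split; [rewrite fmor_dom | rewrite fmor_cod]; congruence. Qed.

Create HintDb hom discriminated.
Global Hint Resolve hom_idm hom_comp hom_tmor hom_fmor F2_hom eta_hom eps_hom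
  lev_hom : hom.

Ltac hom_auto := solve [eauto 30 with hom].
Ltac side := first
  [ reflexivity
  | hom_auto
  | eapply hom_cod_dom; hom_auto ].

Lemma tmor_comp_idr (C : MonCat) (f g : mor C) a : cod f = dom g ->
  tmor (comp g f) (idm a) = comp (tmor g (idm a)) (tmor f (idm a)).
Proof. by move=> fg; rewrite <- tmor_comp by side; rewrite (comp_idl_hom (hom_idm a)). Qed.

Record hom_bij (C D : MonCat) (f : mor C -> mor D) (a b : ob C) (a' b' : ob D) : Prop := {
  hom_bij_hom : forall x, hom x a b -> hom (f x) a' b';
  hom_bij_inj : forall x y, hom x a b -> hom y a b -> f x = f y -> x = y;
  hom_bij_surj : forall y, hom y a' b' -> exists2 x, hom x a b & f x = y }.

Section HomBijections.
Variables C D E : MonCat.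

Lemma hom_bij_ext (f g : mor C -> mor D) a b a' b' :
  (forall x, hom x a b -> f x = g x) -> hom_bij f a b a' b' -> hom_bij g a b a' b'.
Proof.
move=> efg [fH fI fS]; split=> [x Hx | x y Hx Hy | y Hy].
- by rewrite -efg //; apply: fH.
- by rewrite -!efg //; apply: fI.
- by case: (fS y Hy) => x Hx <-; exists x; rewrite ?efg.
Qed.

Lemma hom_bij_comp (f : mor C -> mor D) (g : mor D -> mor E) a b a' b' a'' b'' :
  hom_bij f a b a' b' -> hom_bij g a' b' a'' b'' ->
  hom_bij (fun x => g (f x)) a b a'' b''.
Proof.
move=> [fH fI fS] [gH gI gS]; split=> [x Hx | x y Hx Hy e | z Hz].
- by apply/gH/fH.
- by apply: fI => //; apply: gI => //; apply: fH.
- case: (gS z Hz) => y Hy <-; case: (fS y Hy) => x Hx <-; by exists x.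
Qed.

Lemma hom_bij_cancel_inner (f : mor C -> mor D) (g : mor D -> mor E) a b a' b' a'' b'' :
  hom_bij f a b a' b' -> hom_bij (fun x => g (f x)) a b a'' b'' ->
  hom_bij g a' b' a'' b''.
Proof.
move=> [fH fI fS] [gfH gfI gfS]; split=> [y Hy | y1 y2 Hy1 Hy2 e | z Hz].
- by case: (fS y Hy) => x Hx <-; apply: gfH.
- case: (fS y1 Hy1) => x1 Hx1 e1; case: (fS y2 Hy2) => x2 Hx2 e2.
  by rewrite -e1 -e2 (gfI x1 x2) // e1 e2.
- by case: (gfS z Hz) => x Hx <-; exists (f x); first apply: fH.
Qed.

Lemma hom_bij_cancel_outer (f : mor C -> mor D) (g : mor D -> mor E) a b a' b' a'' b'' :
  (forall x, hom x a b -> hom (f x) a' b') ->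
  hom_bij g a' b' a'' b'' -> hom_bij (fun x => g (f x)) a b a'' b'' ->
  hom_bij f a b a' b'.
Proof.
move=> fH [gH gI gS] [gfH gfI gfS]; split=> [// | x1 x2 Hx1 Hx2 e | y Hy].
- by apply: gfI => //; rewrite e.
- case: (gfS (g y)) => [|x Hx e]; first exact: gH.
  by exists x => //; apply: gI => //; apply: fH.
Qed.

End HomBijections.

Section Yoneda.
Variable C : MonCat.
Implicit Types (f g k : mor C) (a b c e : ob C).

Lemma iso_inverse f a b : hom f a b -> is_iso f ->
  exists2 k, hom k b a & comp k f = idm a /\ comp f k = idm b.
Proof.
by move=> [<- <-] [k ik]; exists k; [apply: hom_inverse ik; split | case: ik => _ [_ []]].
Qed.

Lemma iso_precomp_bij f a b e : hom f a b -> is_iso f ->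
  hom_bij (fun g => comp g f) b e a e.
Proof.
move=> Hf /(iso_inverse Hf) [k Hk [kf fk]].
split=> [g Hg | g1 g2 Hg1 Hg2 E | y Hy]; first hom_auto.
- rewrite -(comp_idr_hom Hg1) -(comp_idr_hom Hg2) -fk.
  rewrite -> !comp_assoc by side; by rewrite E.
- exists (comp y k); first hom_auto.
  by rewrite <- comp_assoc by side; rewrite kf (comp_idr_hom Hy).
Qed.

Lemma iso_postcomp_bij f a b c : hom f a b -> is_iso f ->
  hom_bij (comp f) c a c b.
Proof.
move=> Hf /(iso_inverse Hf) [k Hk [kf fk]].
split=> [g Hg | g1 g2 Hg1 Hg2 E | y Hy]; first hom_auto.
- rewrite -(comp_idl_hom Hg1) -(comp_idl_hom Hg2) -kf.
  rewrite <- !comp_assoc by side; by rewrite E.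
- exists (comp k y); first hom_auto.
  by rewrite -> comp_assoc by side; rewrite fk (comp_idl_hom Hy).
Qed.

Lemma is_iso_of_inverses f k a b : hom f a b -> hom k b a ->
  comp k f = idm a -> comp f k = idm b -> is_iso f.
Proof. by move=> [<- <-] [? ?] kf fk; exists k. Qed.

Lemma iso_of_precomp_bij f a b : hom f a b ->
  (forall e, hom_bij (fun g => comp g f) b e a e) -> is_iso f.
Proof.
move=> Hf bij; case: (hom_bij_surj (bij a) (hom_idm a)) => k Hk kf.
apply: (is_iso_of_inverses Hf Hk kf).
apply: (hom_bij_inj (bij b)); [hom_auto | exact: hom_idm |].
rewrite <- comp_assoc by side.
by rewrite kf (comp_idr_hom Hf) (comp_idl_hom Hf).
Qed.

Lemma iso_of_postcomp_bij f a b : hom f a b ->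
  (forall c, hom_bij (comp f) c a c b) -> is_iso f.
Proof.
move=> Hf bij; case: (hom_bij_surj (bij b) (hom_idm b)) => k Hk fk.
apply: (is_iso_of_inverses Hf Hk _ fk).
apply: (hom_bij_inj (bij a)); [hom_auto | exact: hom_idm |].
rewrite -> comp_assoc by side.
by rewrite fk (comp_idr_hom Hf) (comp_idl_hom Hf).
Qed.
End Yoneda.

Definition luncurry (C : MonCat) (L : LeftClosed C) (X Y : ob C) (h : mor C) : mor C :=
  comp (lev L X Y) (tmor h (idm X)).

Lemma luncurry_hom_bij (C : MonCat) (L : LeftClosed C) X Y Z :
  hom_bij (luncurry L X Y) Z (lihom L X Y) (tob Z X) Y.
Proof.
split=> [h Hh | h1 h2 Hh1 Hh2 E | g Hg]; first by rewrite /luncurry; hom_auto.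
- have Hg : hom (luncurry L X Y h2) (tob Z X) Y by rewrite /luncurry; hom_auto.
  case: (lev_univ L Hg) => h [_ uniq].
  by rewrite -(uniq h1 (conj Hh1 E)) (uniq h2 (conj Hh2 eq_refl)).
- by case: (lev_univ L Hg) => h [[Hh E] _]; exists h.
Qed.

Section Adjunction.
Variables (C D : MonCat) (A : ComonAdj C D).
Local Notation F := (LF A).
Local Notation U := (RU A).

Definition adjunct (c : ob C) (g : mor D) : mor C := comp (fmor U g) (eta A c).

Lemma adjunct_hom c e g : hom g (fob F c) e -> hom (adjunct c g) c (fob U e).
Proof. by rewrite /adjunct; hom_auto. Qed.

Lemma eps_adjunct c e g : hom g (fob F c) e ->
  comp (eps A e) (fmor F (adjunct c g)) = g.
Proof.
move=> Hg; rewrite /adjunct.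
rewrite -> fmor_comp, comp_assoc by side.
have := eps_nat A g; rewrite (proj1 Hg) (proj2 Hg) => ->.
rewrite <- comp_assoc by side.
by rewrite triangle_F (comp_idr_hom Hg).
Qed.

Lemma adjunct_eps c e x : hom x c (fob U e) ->
  adjunct c (comp (eps A e) (fmor F x)) = x.
Proof.
move=> Hx; rewrite /adjunct.
rewrite -> fmor_comp by side; rewrite <- comp_assoc by side.
have := eta_nat A x; rewrite (proj1 Hx) (proj2 Hx) => <-.
rewrite -> comp_assoc by side.
by rewrite triangle_U (comp_idl_hom Hx).
Qed.

Lemma adjunct_hom_bij c e : hom_bij (adjunct c) (fob F c) e c (fob U e).
Proof.
split=> [g Hg | g1 g2 Hg1 Hg2 E | x Hx]; first exact: adjunct_hom.
- by rewrite -(eps_adjunct Hg1) -(eps_adjunct Hg2) E.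
- by exists (comp (eps A e) (fmor F x)); [hom_auto | apply: adjunct_eps].
Qed.

End Adjunction.
Global Hint Resolve adjunct_hom : hom.

Section StrongMonoidalRightAdjoint.
Variables (C D : MonCat) (A : ComonAdj C D) (Um2 : ob D -> ob D -> mor C).
Hypothesis Um2_inverse : forall X Y, is_inverse (F2 (RU A) X Y) (Um2 X Y).
Local Notation F := (LF A).
Local Notation U := (RU A).

Lemma Um2_hom X Y : hom (Um2 X Y) (tob (fob U X) (fob U Y)) (fob U (tob X Y)).
Proof. exact: hom_inverse (F2_hom U X Y) (Um2_inverse X Y). Qed.
Local Hint Resolve Um2_hom : hom.

Lemma Um2K X Y : comp (Um2 X Y) (F2 U X Y) = idm (fob U (tob X Y)).
Proof. by case: (Um2_inverse X Y) => _ [_ [-> _]]; rewrite (proj1 (F2_hom U X Y)). Qed.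

Lemma F2K X Y : comp (F2 U X Y) (Um2 X Y) = idm (tob (fob U X) (fob U Y)).
Proof. by case: (Um2_inverse X Y) => _ [_ [_ ->]]; rewrite (proj2 (F2_hom U X Y)). Qed.

Lemma Um2_nat g k a b a' b' : hom g a b -> hom k a' b' ->
  comp (Um2 b b') (tmor (fmor U g) (fmor U k)) = comp (fmor U (tmor g k)) (Um2 a a').
Proof.
move=> Hg Hk; have := F2_nat U g k.
rewrite (proj1 Hg) (proj1 Hk) (proj2 Hg) (proj2 Hk) => nat2.
have Hgk : hom (tmor (fmor U g) (fmor U k))
              (tob (fob U a) (fob U a')) (tob (fob U b) (fob U b')) by hom_auto.
rewrite -(comp_idr_hom Hgk) -F2K.
rewrite -> (comp_assoc (f:=Um2 a a') (g:=F2 U a a')) by side; rewrite nat2.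
rewrite <- (comp_assoc (f:=Um2 a a') (h:=F2 U b b')) by side.
rewrite -> (comp_assoc (g:=F2 U b b') (h:=Um2 b b')) by side.
by rewrite Um2K; apply: comp_idl_hom; hom_auto.
Qed.

Lemma hopf_l_hom c d :
  hom (hopf_l A c d) (fob F (tob c (fob U d))) (tob (fob F c) d).
Proof. rewrite /hopf_l; hom_auto. Qed.
Local Hint Resolve hopf_l_hom : hom.

Lemma adjunct_hopf_l c d :
  adjunct A (tob c (fob U d)) (hopf_l A c d)
  = comp (Um2 (fob F c) d) (tmor (eta A c) (idm (fob U d))).
Proof.
have mate : comp (F2 U (fob F c) d) (adjunct A (tob c (fob U d)) (hopf_l A c d))
            = tmor (eta A c) (idm (fob U d)).
{ rewrite /adjunct /hopf_l.
  rewrite -> fmor_comp by side.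
  rewrite -> !(comp_assoc (h:=F2 U _ _)) by side.
  have := F2_nat U (idm (fob F c)) (eps A d).
  rewrite dom_id cod_id (proj1 (eps_hom A d)) (proj2 (eps_hom A d)) => <-.
  rewrite <- (comp_assoc (g:=F2 U _ _)) by side.
  rewrite <- (comp_assoc (h:=tmor _ _)) by side.
  rewrite eta_comon2 (comp_idr_hom (hom_tmor (eta_hom A c) (eta_hom A (fob U d)))).
  rewrite <- tmor_comp by side.
  by rewrite fmor_id (comp_idl_hom (eta_hom A c)) triangle_U. }
rewrite -mate.
rewrite -> comp_assoc by side.
by rewrite Um2K (comp_idl_hom (adjunct_hom (hopf_l_hom c d))).
Qed.

Variables (LC : LeftClosed C) (LD : LeftClosed D).

Definition lcomparison (d e : ob D) (h : mor C) : Prop :=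
  hom h (fob U (lihom LD d e)) (lihom LC (fob U d) (fob U e)) /\
  luncurry LC (fob U d) (fob U e) h = comp (fmor U (lev LD d e)) (Um2 (lihom LD d e) d).

Lemma luncurry_comparison_adjunct c d e g h :
  hom g (fob F c) (lihom LD d e) -> lcomparison d e h ->
  luncurry LC (fob U d) (fob U e) (comp h (adjunct A c g))
  = adjunct A (tob c (fob U d)) (comp (luncurry LD d e g) (hopf_l A c d)).
Proof.
move=> Hg [Hh Eh]; rewrite /luncurry in Eh *.
rewrite -> tmor_comp_idr by side.
rewrite -> comp_assoc by side; rewrite Eh /adjunct.
rewrite -> tmor_comp_idr by side.
rewrite -(fmor_id U d).
rewrite -> (comp_assoc (h:=comp _ (Um2 _ _))) by side.
rewrite <- (comp_assoc (g:=Um2 _ _)) by side.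
rewrite (Um2_nat Hg (hom_idm d)) fmor_id.
rewrite <- (comp_assoc (f:=tmor (eta A c) _) (g:=comp _ (Um2 _ _))) by side.
rewrite <- (comp_assoc (f:=tmor (eta A c) _) (g:=Um2 _ _)) by side.
rewrite -adjunct_hopf_l /adjunct.
rewrite -> !fmor_comp by side.
by rewrite <- !comp_assoc by side.
Qed.

Lemma comparison_postcomp_bij_iff_hopf_l_precomp_bij c d e h : lcomparison d e h ->
  hom_bij (comp h) c (fob U (lihom LD d e)) c (lihom LC (fob U d) (fob U e)) <->
  hom_bij (fun k => comp k (hopf_l A c d)) (tob (fob F c) d) e (fob F (tob c (fob U d))) e.
Proof.
move=> comp_h; have [Hh _] := comp_h.
pose via_h g := luncurry LC (fob U d) (fob U e) (comp h (adjunct A c g)).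
pose via_H g := adjunct A (tob c (fob U d)) (comp (luncurry LD d e g) (hopf_l A c d)).
have square g : hom g (fob F c) (lihom LD d e) -> via_h g = via_H g.
  by move=> Hg; apply: luncurry_comparison_adjunct Hg comp_h.
have adj_c := adjunct_hom_bij A c (lihom LD d e).
have adj_cUd := adjunct_hom_bij A (tob c (fob U d)) e.
have unc_C := luncurry_hom_bij LC (fob U d) (fob U e) c.
have unc_D := luncurry_hom_bij LD d e (fob F c).
split=> [post_h | pre_H].
- have bij_h : hom_bij via_h _ _ _ _ := hom_bij_comp adj_c (hom_bij_comp post_h unc_C).
  have := hom_bij_cancel_inner
    (g := fun k => adjunct A _ (comp k (hopf_l A c d))) unc_D (hom_bij_ext square bij_h).
  by apply: hom_bij_cancel_outer adj_cUd => k Hk; hom_auto.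
- have bij_H : hom_bij via_H _ _ _ _ := hom_bij_comp unc_D (hom_bij_comp pre_H adj_cUd).
  have := hom_bij_cancel_inner (g := fun x => luncurry LC _ _ (comp h x))
    adj_c (hom_bij_ext (fun g Hg => eq_sym (square g Hg)) bij_H).
  by apply: hom_bij_cancel_outer unc_C => x Hx; hom_auto.
Qed.

Lemma lcomparison_exists d e : exists h, lcomparison d e h.
Proof.
have Hg : hom (comp (fmor U (lev LD d e)) (Um2 (lihom LD d e) d))
              (tob (fob U (lihom LD d e)) (fob U d)) (fob U e) by hom_auto.
by case: (lev_univ LC Hg) => h [[Hh Eh] _]; exists h.
Qed.

Lemma left_Hopf_iff_left_closed : left_Hopf A <-> left_closed_functor LC LD U Um2.
Proof.
split=> [hopf d e h Hh Eh | closed c d].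
- apply: (iso_of_postcomp_bij Hh) => c.
  apply/(comparison_postcomp_bij_iff_hopf_l_precomp_bij c (conj Hh Eh)).
  exact: iso_precomp_bij (hopf_l_hom c d) (hopf c d).
- apply: (iso_of_precomp_bij (hopf_l_hom c d)) => e.
  have [h [Hh Eh]] := lcomparison_exists d e.
  apply/(comparison_postcomp_bij_iff_hopf_l_precomp_bij c (conj Hh Eh)).
  exact: iso_postcomp_bij Hh (closed d e h Hh Eh).
Qed.
End StrongMonoidalRightAdjoint.

Definition MonCat_rev (C : MonCat) : MonCat.
Proof.
refine {| ob := ob C; mor := mor C; dom := @dom C; cod := @cod C; idm := @idm C;
          comp := @comp C; tob := fun a b => tob b a; tmor := fun f g => tmor g f;
          munit := munit C |}.
- exact: dom_id.
- exact: cod_id.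
- exact: dom_comp.
- exact: cod_comp.
- exact: comp_idl.
- exact: comp_idr.
- exact: comp_assoc.
- by move=> f g; apply: dom_tmor.
- by move=> f g; apply: cod_tmor.
- by move=> a b; apply: tmor_id.
- by move=> f g f' g' fg fg'; apply: tmor_comp.
- by move=> a b c; rewrite tob_assoc.
- by move=> f g h; rewrite tmor_assoc.
- exact: tob_unitr.
- exact: tob_unitl.
- exact: tmor_unitr.
- exact: tmor_unitl.
Defined.

Definition Functor_rev (C D : MonCat) (F : Functor C D) :
    Functor (MonCat_rev C) (MonCat_rev D) :=
  @Build_Functor (MonCat_rev C) (MonCat_rev D) (fob F) (fmor F) (fmor_dom F) (fmor_cod F)
     (fmor_id F) (fmor_comp F).

Definition ComonFun_rev (C D : MonCat) (F : ComonFun C D) :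
    ComonFun (MonCat_rev C) (MonCat_rev D).
Proof.
refine {| cfun := Functor_rev F; F2 := fun X Y => F2 F Y X; F0 := F0 F |}.
- by move=> X Y; apply: (F2_hom F Y X).
- by move=> f g; apply: (F2_nat F g f).
- exact: (F0_hom F).
- by move=> X Y Z; rewrite (F2_coassoc F Z Y X).
- exact: (F0_counitr F).
- exact: (F0_counitl F).
Defined.

Definition ComonAdj_rev (C D : MonCat) (A : ComonAdj C D) :
    ComonAdj (MonCat_rev C) (MonCat_rev D).
Proof.
refine {| LF := ComonFun_rev (LF A); RU := ComonFun_rev (RU A); eta := eta A; eps := eps A |}.
- exact: (eta_hom A).
- exact: (eta_nat A).
- exact: (eps_hom A).
- exact: (eps_nat A).
- exact: (triangle_F A).
- exact: (triangle_U A).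
- by move=> X Y; apply: (eta_comon2 A Y X).
- exact: (eta_comon0 A).
- by move=> X Y; apply: (eps_comon2 A Y X).
- exact: (eps_comon0 A).
Defined.

Definition RightClosed_rev (C : MonCat) (R : RightClosed C) : LeftClosed (MonCat_rev C) :=
  @Build_LeftClosed (MonCat_rev C) (rihom R) (rev R) (rev_hom R) (rev_univ R).

Lemma right_Hopf_iff_right_closed (C D : MonCat) (A : ComonAdj C D)
    (Um2 : ob D -> ob D -> mor C)
    (Um2_inverse : forall X Y, is_inverse (F2 (RU A) X Y) (Um2 X Y))
    (RC : RightClosed C) (RD : RightClosed D) :
  right_Hopf A <-> right_closed_functor RC RD (RU A) Um2.
Proof.
have := left_Hopf_iff_left_closed (A := ComonAdj_rev A) (Um2 := fun X Y => Um2 Y X)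
  (fun X Y => Um2_inverse Y X) (RightClosed_rev RC) (RightClosed_rev RD).
move=> [hopf_closed closed_hopf]; split=> [hopf | closed d c].
- by apply: hopf_closed => c d; apply: hopf.
- exact: closed_hopf closed c d.
Qed.

Theorem mainTheorem5 (C D : MonCat) (A : ComonAdj C D)
    (Um2 : ob D -> ob D -> mor C)
    (HUm2 : forall X Y, is_inverse (F2 (RU A) X Y) (Um2 X Y)) :
  (forall (LC : LeftClosed C) (LD : LeftClosed D),
      left_Hopf A <-> left_closed_functor LC LD (RU A) Um2) /\
  (forall (RC : RightClosed C) (RD : RightClosed D),
      right_Hopf A <-> right_closed_functor RC RD (RU A) Um2).
Proof.
split=> [LC LD | RC RD].
- exact: left_Hopf_iff_left_closed.
- exact: right_Hopf_iff_right_closed.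
Qed.
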